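(* Let $n\ge 2$ and set $k=\lfloor \log_2 n\rfloor$. Then $v(n)\le n-k$ if $n$ and $k$ have different parity, and $v(n)\le n-k+1$ otherwise.
   Context: A voter on a finite candidate set $A$ is a linear order (ranking) of $A$. A set of voters is a nonempty finite multiset of voters. A strong preference pattern on $A$ is a tournament $T$ on vertex set $A$. A set of voters $U$ generates $T$ if for every pair of distinct candidates $x,y$, the arc $(x,y)$ is in $T$ if and only if strictly more voters of $U$ rank $x$ above $y$ than rank $y$ above $x$. For a tournament $T$, $v(T)$ denotes the minimum size of a set of voters generating $T$, and $v(n)=\max\{v(T): T \text{ a tournament on } n \text{ vertices}\}$. *)

From mathcomp Require Import all_boot perm.
Set Implicit Arguments. Unset Strict Implicit. Unset Printing Implicit Defensive.

(* A voter is a linear order on 'I_n,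
   encoded as a bijection [p : {perm 'I_n}] giving each candidate its
   position (0 = top); voter p ranks x above y iff p x < p y. *)
Definition voter (n : nat) := {perm 'I_n}.

Definition ranks_above n (p : voter n) (x y : 'I_n) : bool := p x < p y.

Definition is_tournament n (T : rel 'I_n) : Prop :=
  (forall x, ~~ T x x) /\
  (forall x y, x != y -> (T x y) (+) (T y x)).

(* A set of voters is a nonempty finite multiset, i.e. a nonempty sequence
   (order irrelevant). *)
Definition generates n (U : seq (voter n)) (T : rel 'I_n) : Prop :=
  U != [::] /\
  forall x y : 'I_n, x != y ->
    (T x y = (count (fun p => ranks_above p y x) U <
              count (fun p => ranks_above p x y) U)).

From mathcomp Require Import all_boot perm zify.
Set Implicit Arguments. Unset Strict Implicit. Unset Printing Implicit Defensive.

(* Choose j = k or j = k - 1 so that n - j - 1 is even.  Since 2 ^ j <= n,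
   the tournament has a transitive subtournament on j + 1 vertices, which a
   single voter generates.  The remaining vertices are then added two at a
   time at the cost of two voters each.  Given an odd electorate of m voters
   generating T on V and new vertices a, b with b -> a, put a on top and b
   at the bottom of (m + 1) / 2 of the voters and the other way round for
   the remaining ones, without changing their orders on V; then a beats
   every old vertex by one vote and b loses to each by one.  Two more voters
   repair the arcs at a and b that go the wrong way and cancel each other on
   every pair of old vertices.  This gives 1 + (n - j - 1) = n - j voters. *)

Lemma ltn_lex (N c1 c2 u v : nat) : u < N -> v < N ->
  (c1 * N + u < c2 * N + v) = (c1 < c2) || (c1 == c2) && (u < v).
Proof.
move=> uN vN; case: (ltngtP c1 c2) => [lt_c|gt_c|->] /=; last by rewrite ltn_add2l.
- by apply/idP; nia.
- by apply/negbTE; rewrite -leqNgt; nia.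
Qed.

Lemma size_take_uphalf (A : Type) (s : seq A) : odd (size s) ->
  size (take (uphalf (size s)) s) = (size (drop (uphalf (size s)) s)).+1.
Proof.
move=> odd_s; have := odd_double_half (size s).+1; rewrite /= odd_s /= => half_s.
by rewrite size_drop size_takel uphalfE; lia.
Qed.

Section LexVoter.
Variable n : nat.
Implicit Types (k : 'I_n -> nat) (c : 'I_n -> nat) (t : {perm 'I_n}) (x y : 'I_n).

(* Position 0 is the top of a voter, so a candidate's position is the number
   of candidates with a larger key. *)
Definition rank k x := #|[set z | k x < k z]|.

Lemma rank_ltn k x : rank k x < n.
Proof.
have: [set z | k x < k z] \subset [set~ x].
  by apply/subsetP=> z; rewrite !inE; apply: contraTneq => ->; rewrite ltnn.
move/subset_leq_card; rewrite cardsC1 card_ord /rank; have := ltn_ord x; lia.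
Qed.

Lemma rank_lt k : injective k -> forall x y, (rank k x < rank k y) = (k y < k x).
Proof.
move=> k_inj.
have lt_rank x y : k y < k x -> rank k x < rank k y.
  move=> lt_yx; apply/proper_card/properP; split.
    by apply/subsetP=> z; rewrite !inE; apply: ltn_trans.
  by exists x; rewrite !inE ?ltnn.
move=> x y; case: (ltngtP (k y) (k x)) => [/lt_rank -> //| /lt_rank lt_xy | eq_k].
  by apply/negbTE; rewrite -leqNgt ltnW.
by rewrite (k_inj _ _ eq_k) ltnn.
Qed.

Lemma rank_inj k : injective k -> injective (fun x => Ordinal (rank_ltn k x)).
Proof.
move=> k_inj x y /(congr1 val) /= eq_rank; apply: (k_inj).
by case: (ltngtP (k x) (k y)) => // lt_k;
  [move: (rank_lt k_inj y x) | move: (rank_lt k_inj x y)]; rewrite lt_k eq_rank ltnn.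
Qed.

Definition lex_key c t x := c x * n + t x.

Lemma lex_key_inj c t : injective (lex_key c t).
Proof.
move=> x y /(congr1 (modn^~ n)); rewrite /lex_key !modnMDl !modn_small //.
by move/val_inj/perm_inj.
Qed.

Definition lex_voter c t : voter n := perm (rank_inj (@lex_key_inj c t)).

Lemma lex_voter_above c t x y :
  ranks_above (lex_voter c t) x y = (c y < c x) || (c y == c x) && (t y < t x).
Proof. by rewrite /ranks_above !permE /= rank_lt ?ltn_lex //; apply: lex_key_inj. Qed.

Definition rev_perm : {perm 'I_n} := perm (@rev_ord_inj n).

Lemma rev_perm_lt x y : (rev_perm y < rev_perm x) = (x < y).
Proof. by rewrite !permE /=; have := ltn_ord x; have := ltn_ord y; lia. Qed.

End LexVoter.

Section Preference.
Variable n : nat.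
Implicit Types (U L : seq (voter n)) (p : voter n) (a b x y : 'I_n).

Definition prefer U x y := count (fun p => ranks_above p x y) U.

Lemma prefer_cat U1 U2 x y : prefer (U1 ++ U2) x y = prefer U1 x y + prefer U2 x y.
Proof. exact: count_cat. Qed.

Lemma ranks_above_sym p x y : x != y -> ranks_above p y x = ~~ ranks_above p x y.
Proof.
move=> xy; rewrite /ranks_above; case: ltngtP => // /val_inj /perm_inj eq_yx.
by rewrite eq_yx eqxx in xy.
Qed.

Lemma prefer_sum U x y : x != y -> prefer U x y + prefer U y x = size U.
Proof.
move=> xy; rewrite -(count_predC (fun p => ranks_above p x y)); congr (_ + _).
by apply: eq_count => p; rewrite /= ranks_above_sym.
Qed.

Lemma prefer_lt_odd U d x y : x != y -> size U = d.*2.+1 ->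
  (prefer U y x < prefer U x y) = (d < prefer U x y).
Proof. by move/(prefer_sum U) => sum_xy size_U; lia. Qed.

(* Moves [a] to the top and [b] to the bottom of [p], keeping the order of
   the other candidates. *)
Definition raise_lower a b p : voter n :=
  lex_voter (fun x => if x == a then 2 else if x == b then 0 else 1) (p * rev_perm n).

Lemma prefer_raised a b L u : u != a -> prefer (map (raise_lower a b) L) a u = size L.
Proof.
move=> ua; rewrite /prefer count_map -count_predT; apply: eq_count => p.
by rewrite /= lex_voter_above eqxx (negbTE ua); case: ifP.
Qed.

Lemma prefer_lowered a b L u : a != b -> u != b ->
  prefer (map (raise_lower a b) L) u b = size L.
Proof.
move=> ab ub; rewrite /prefer count_map -count_predT; apply: eq_count => p.
by rewrite /= lex_voter_above eqxx (negbTE ub) eq_sym (negbTE ab); case: ifP.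
Qed.

Lemma prefer_over_raised a b L u : u != a -> prefer (map (raise_lower a b) L) u a = 0.
Proof.
move=> ua; have := prefer_sum (map (raise_lower a b) L) ua.
by rewrite prefer_raised // size_map; lia.
Qed.

Lemma prefer_under_lowered a b L u : a != b -> u != b ->
  prefer (map (raise_lower a b) L) b u = 0.
Proof.
move=> ab ub; have := prefer_sum (map (raise_lower a b) L) ub.
by rewrite prefer_lowered // size_map; lia.
Qed.

Lemma prefer_raise_lower a b L x y : x != a -> x != b -> y != a -> y != b ->
  prefer (map (raise_lower a b) L) x y = prefer L x y.
Proof.
move=> xa xb ya yb; rewrite /prefer count_map; apply: eq_count => p /=.
by rewrite lex_voter_above !ifN // ltnn eqxx /= !permM rev_perm_lt.
Qed.

End Preference.

Section Tournament.
Variables (n : nat) (T : rel 'I_n).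
Hypothesis tourT : is_tournament T.
Implicit Types (U : seq (voter n)) (x y a b u : 'I_n) (A S V : {set 'I_n}).

Lemma tournament_irrefl x : T x x = false.
Proof. by case: tourT => irr _; apply/negbTE. Qed.

Lemma tournament_asym x y : x != y -> T y x = ~~ T x y.
Proof. by case: tourT => _ xorT /xorT; case: (T x y); case: (T y x). Qed.

Lemma tournament_antisym x y : T x y -> T y x = false.
Proof.
move=> Txy; have xy : x != y by apply: contraTneq Txy => ->; rewrite tournament_irrefl.
by rewrite tournament_asym // Txy.
Qed.

Definition ranking S (g : 'I_n -> nat) := {in S &, forall y z, T y z -> g z < g y}.

Lemma ranking_add_top S g x : {in S, forall y, T x y} -> ranking S g ->
  ranking (x |: S) (fun w => if w == x then (\max_v g v).+1 else g w).
Proof.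
move=> topx rankS y z; rewrite !inE.
case: (eqVneq y x) => [->|yx]; case: (eqVneq z x) => [->|zx] /=.
- by rewrite tournament_irrefl.
- by move=> _ _ _; rewrite ltnS leq_bigmax.
- by move=> yS _ /tournament_antisym; rewrite topx.
- exact: rankS.
Qed.

Lemma ranking_add_bottom S g x : {in S, forall y, T y x} -> ranking S g ->
  ranking (x |: S) (fun w => if w == x then 0 else (g w).+1).
Proof.
move=> botx rankS y z; rewrite !inE.
case: (eqVneq y x) => [->|yx]; case: (eqVneq z x) => [->|zx] //=.
- by rewrite tournament_irrefl.
- by move=> _ zS /tournament_antisym; rewrite botx.
- by move=> yS zS Tyz; rewrite ltnS; apply: rankS.
Qed.

(* Pick [x], recurse into the larger of its out- and in-neighbourhoods in
   [A], and put [x] on top or at the bottom. *)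
Lemma transitive_subtournament j A : 2 ^ j <= #|A| ->
  exists S g, [/\ S \subset A, #|S| = j.+1 & ranking S g].
Proof.
elim: j A => [|j IHj] A A_big.
  have /card_gt0P [x xA] : 0 < #|A| by rewrite expn0 in A_big.
  exists [set x], (fun _ => 0); split; rewrite ?sub1set ?cards1 //.
  by move=> y z; rewrite !inE => /eqP-> /eqP->; rewrite tournament_irrefl.
have /card_gt0P [x xA] : 0 < #|A| by apply: leq_trans A_big; rewrite expn_gt0.
set Out := [set y in A | T x y]; set In := [set y in A | T y x].
have cover : A :\ x \subset Out :|: In.
  apply/subsetP=> y; rewrite !inE => /andP [yx ->] /=.
  by rewrite (tournament_asym yx) orNb.
have := subset_leq_card cover; rewrite cardsU => card_cover.
have := cardsD1 x A; rewrite xA => cardA.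
have OutA : Out \subset A by apply/subsetP=> y; rewrite inE => /andP [].
have InA : In \subset A by apply/subsetP=> y; rewrite inE => /andP [].
case: (leqP (2 ^ j) #|Out|) => [Out_big | Out_small].
  have [S [g [SOut cardS rankS]]] := IHj _ Out_big.
  have topx : {in S, forall y, T x y} by move=> y /(subsetP SOut); rewrite inE => /andP [].
  exists (x |: S), (fun w => if w == x then (\max_v g v).+1 else g w); split.
  - by rewrite subUset sub1set xA (subset_trans SOut OutA).
  - have xS : x \notin S by apply/negP=> /topx; rewrite tournament_irrefl.
    by rewrite cardsU1 xS cardS.
  - exact: ranking_add_top.
have In_big : 2 ^ j <= #|In| by rewrite expnS in A_big; lia.
have [S [g [SIn cardS rankS]]] := IHj _ In_big.
have botx : {in S, forall y, T y x} by move=> y /(subsetP SIn); rewrite inE => /andP [].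
exists (x |: S), (fun w => if w == x then 0 else (g w).+1); split.
- by rewrite subUset sub1set xA (subset_trans SIn InA).
- have xS : x \notin S by apply/negP=> /botx; rewrite tournament_irrefl.
  by rewrite cardsU1 xS cardS.
- exact: ranking_add_bottom.
Qed.

Definition majority_on V U := {in V &, forall x y, T x y -> prefer U y x < prefer U x y}.

Lemma generates_of_majority U : U != [::] -> majority_on setT U -> generates U T.
Proof.
move=> U0 majU; split=> // x y xy; case Txy: (T x y); first by rewrite majU ?inE.
have /majU Tyx : T y x by rewrite tournament_asym // Txy.
by apply/esym/negbTE; rewrite -leqNgt ltnW // Tyx ?inE.
Qed.

Lemma majority_on_ranking S g : ranking S g -> majority_on S [:: lex_voter g 1%g].
Proof.
move=> rankS x y xS yS /(rankS x y xS yS) lt_g.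
by rewrite /prefer /= !lex_voter_above lt_g [g x < g y]ltnNge (ltnW lt_g) gtn_eqF.
Qed.

Section Gadget.
Variables a b : 'I_n.
Hypothesis Tba : T b a.

(* The other vertices fall into four classes according to their arcs with
   [a] and [b].  Read from the bottom, both gadget voters place every class
   above or below [a] and [b] as [majority_on_add_pair] requires, and the
   second one lists the classes in the reverse order of the first one and
   breaks ties the other way, so the two cancel on every pair not meeting
   [a] or [b]. *)
Definition gadget_class1 x :=
  if x == b then 5 else if x == a then 1 else
  if T x a then (if T b x then 3 else 2) else (if T b x then 4 else 0).

Definition gadget_class2 x :=
  if x == b then 3 else if x == a then 1 else
  if T x a then (if T b x then 2 else 4) else (if T b x then 0 else 5).

Definition gadget := [:: lex_voter gadget_class1 1%g; lex_voter gadget_class2 (rev_perm n)].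

Let ab : a != b. Proof. by apply: contraTneq Tba => ->; rewrite tournament_irrefl. Qed.
Let ba : b != a. Proof. by rewrite eq_sym. Qed.

Lemma gadget_ba : prefer gadget b a = 2.
Proof.
by rewrite /prefer /= !lex_voter_above /gadget_class1 /gadget_class2 !eqxx (negbTE ab).
Qed.

Lemma gadget_mid x y : x != a -> x != b -> y != a -> y != b -> x != y ->
  prefer gadget x y = 1.
Proof.
move=> xa xb ya yb xy; rewrite /prefer /= !lex_voter_above !perm1 rev_perm_lt.
rewrite /gadget_class1 /gadget_class2 (negbTE xa) (negbTE xb) (negbTE ya) (negbTE yb).
have: val x != val y by [].
by case: (T x a); case: (T b x); case: (T y a); case: (T b y); case: (ltngtP x y).
Qed.

Lemma gadget_a u : u != a -> u != b ->
  (T u a -> prefer gadget u a = 2) /\ (T a u -> 0 < prefer gadget a u).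
Proof.
move=> ua ub; rewrite /prefer /= !lex_voter_above /gadget_class1 /gadget_class2.
rewrite !eqxx (negbTE ua) (negbTE ub) ?(negbTE ab) ?(negbTE ba) (tournament_asym ua).
by case: (T u a); case: (T b u).
Qed.

Lemma gadget_b u : u != a -> u != b ->
  (T b u -> prefer gadget b u = 2) /\ (T u b -> 0 < prefer gadget u b).
Proof.
move=> ua ub; have bu : b != u by rewrite eq_sym.
rewrite /prefer /= !lex_voter_above /gadget_class1 /gadget_class2.
rewrite !eqxx (negbTE ua) (negbTE ub) ?(negbTE ab) ?(negbTE ba) (tournament_asym bu).
by case: (T u a); case: (T b u).
Qed.

Definition add_pair U :=
  map (raise_lower a b) (take (uphalf (size U)) U) ++
  map (raise_lower b a) (drop (uphalf (size U)) U) ++ gadget.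

Lemma size_add_pair U : size (add_pair U) = (size U).+2.
Proof.
by rewrite /add_pair !size_cat !size_map /= addnA -size_cat cat_take_drop addn2.
Qed.

Lemma majority_on_add_pair V U : a \notin V -> b \notin V -> odd (size U) ->
  majority_on V U -> majority_on (a |: (b |: V)) (add_pair U).
Proof.
move=> aV bV oddU majU.
set h := uphalf (size U); set Up := take h U; set Down := drop h U.
have sizeUp : size Up = (size Down).+1 := size_take_uphalf oddU.
have sizeU : size U = (size Down).*2.+1.
  by rewrite -(cat_take_drop h U) size_cat sizeUp -addnn addSn.
have size_add : size (add_pair U) = (size Down).+1.*2.+1.
  by rewrite size_add_pair sizeU doubleS.
have prefer_add x y : prefer (add_pair U) x y =
    prefer (map (raise_lower a b) Up) x y + prefer (map (raise_lower b a) Down) x y +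
    prefer gadget x y by rewrite /add_pair !prefer_cat addnA.
have win x y : x != y -> (size Down).+1 < prefer (add_pair U) x y ->
    prefer (add_pair U) y x < prefer (add_pair U) x y.
  by move=> xy; rewrite (prefer_lt_odd xy size_add).
have notV u : u \in V -> (u != a) * (u != b).
  by move=> uV; split; apply: contraTneq uV => ->.
move=> x y; rewrite !inE => xV' yV'.
case/or3P: xV' => [/eqP->|/eqP->|xV]; case/or3P: yV' => [/eqP->|/eqP->|yV] Txy.
- by rewrite tournament_irrefl in Txy.
- by rewrite tournament_antisym in Txy.
- have [ya yb] := notV y yV; apply: win; first by rewrite eq_sym.
  rewrite prefer_add prefer_raised // prefer_under_lowered // ?eq_sym // sizeUp.
  by rewrite addn0 -[ltnLHS]addn0 ltn_add2l (gadget_a ya yb).2.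
- apply: win; first by rewrite eq_sym.
  by rewrite prefer_add prefer_under_lowered // prefer_raised // gadget_ba addn2.
- by rewrite tournament_irrefl in Txy.
- have [ya yb] := notV y yV; apply: win; first by rewrite eq_sym.
  rewrite prefer_add prefer_under_lowered // prefer_raised // ?eq_sym //.
  by rewrite (gadget_b ya yb).1 // addn2.
- have [xa xb] := notV x xV; apply: win => //.
  rewrite prefer_add prefer_over_raised // prefer_lowered // ?eq_sym //.
  by rewrite (gadget_a xa xb).1 // addn2.
- have [xa xb] := notV x xV; apply: win => //.
  rewrite prefer_add prefer_lowered // prefer_over_raised // ?eq_sym // sizeUp.
  by rewrite addn0 -[ltnLHS]addn0 ltn_add2l (gadget_b xa xb).2.
- have [xa xb] := notV x xV; have [ya yb] := notV y yV.
  have xy : x != y by apply: contraTneq Txy => ->; rewrite tournament_irrefl.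
  apply: win => //; rewrite prefer_add !prefer_raise_lower // gadget_mid // addn1 ltnS.
  by rewrite -prefer_cat cat_take_drop -(prefer_lt_odd xy sizeU) majU.
Qed.

End Gadget.

Lemma majority_on_extend_pair V U a b : a \notin V -> b \notin V -> a != b ->
  odd (size U) -> majority_on V U ->
  exists2 U', size U' = (size U).+2 & majority_on (a |: (b |: V)) U'.
Proof.
wlog Tba : a b / T b a.
  move=> oriented aV bV ab; case Tba: (T b a); first exact: oriented.
  rewrite setUCA; apply: oriented; rewrite 1?eq_sym //.
  by rewrite (@tournament_asym b) ?Tba // eq_sym.
move=> aV bV _ oddU majU.
by exists (add_pair a b U); [exact: size_add_pair | exact: majority_on_add_pair].
Qed.

Lemma majority_on_complete m V U : #|~: V| = m.*2 -> odd (size U) ->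
  majority_on V U -> exists2 U', size U' = size U + m.*2 & majority_on setT U'.
Proof.
elim: m V U => [|m IHm] V U cardV oddU majU.
  exists U; first by rewrite addn0.
  by rewrite -setC0 -(cards0_eq cardV) setCK.
have /card_gt0P [a aV] : 0 < #|~: V| by rewrite cardV.
have := cardsD1 a (~: V); rewrite aV cardV doubleS add1n => -[cardVa].
have /card_gt0P [b bVa] : 0 < #|~: V :\ a| by rewrite -cardVa.
have := cardsD1 b (~: V :\ a); rewrite bVa -cardVa add1n => -[cardVab].
move: aV bVa; rewrite !inE => aV /andP [ba bV].
have ab : a != b by rewrite eq_sym.
have [U1 sizeU1 majU1] := majority_on_extend_pair aV bV ab oddU majU.
have cardV1 : #|~: (a |: (b |: V))| = m.*2.
  suff -> : ~: (a |: (b |: V)) = ~: V :\ a :\ b by rewrite cardVab.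
  by apply/setP=> x; rewrite !inE; case: (x == a); case: (x == b).
have oddU1 : odd (size U1) by rewrite sizeU1 /= negbK.
have [U' sizeU' majU'] := IHm _ _ cardV1 oddU1 majU1.
by exists U'; rewrite // sizeU' sizeU1 !addSn !addnS.
Qed.

Lemma exists_generates_size j : 2 ^ j <= n -> odd n != odd j ->
  exists2 U, generates U T & size U = n - j.
Proof.
move=> pow_j parity.
have pow_j_setT : 2 ^ j <= #|[set: 'I_n]| by rewrite cardsT card_ord.
have [S [g [_ cardS rankS]]] := transitive_subtournament pow_j_setT.
have cardSC : #|S| + #|~: S| = n by rewrite cardsC card_ord.
have cardSC_eq : #|~: S| = n - j.+1 by lia.
have even_SC : ~~ odd #|~: S|.
  rewrite cardSC_eq oddB /=; last by lia.
  by move: parity; case: (odd n); case: (odd j).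
have cardSC2 : #|~: S| = (#|~: S|./2).*2.
  by rewrite -{1}[#|~: S|]odd_double_half (negbTE even_SC).
have [//|U sizeU majU] := majority_on_complete cardSC2 _ (majority_on_ranking rankS).
exists U; first by apply: generates_of_majority; rewrite // -size_eq0 sizeU.
by rewrite sizeU -cardSC2 cardSC_eq /=; lia.
Qed.

End Tournament.

Theorem mainTheorem3 (n : nat) : 2 <= n ->
  let k := trunc_log 2 n in
  forall T : rel 'I_n, is_tournament T ->
  exists U : seq (voter n), generates U T /\
    size U <= (if odd n != odd k then n - k else n - k + 1).
Proof.
move=> n_ge2 k T tourT.
have k_gt0 : 0 < k by rewrite trunc_log_gt0.
have pow_k : 2 ^ k <= n := trunc_logP (leqnn 2) (ltnW n_ge2).
case: ifP => parity.
  have [U genU sizeU] := exists_generates_size tourT pow_k parity.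
  by exists U; rewrite sizeU.
have pow_k1 : 2 ^ k.-1 <= n by rewrite (leq_trans _ pow_k) // leq_pexp2l // leq_pred.
have parity1 : odd n != odd k.-1.
  by move: parity; rewrite -{1}(prednK k_gt0) oddS; case: (odd n); case: (odd k.-1).
have [U genU sizeU] := exists_generates_size tourT pow_k1 parity1.
by exists U; split; last (rewrite sizeU; lia).
Qed.
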